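(* Let $G$ be a finite metacyclic group and let $G=AB$ be a metacyclic factorization. Let $m=|A|$, $s=[G:B]$, $r=r_G(A)$ and $o=o_G(A)$. Then: (1) for every set of primes $\mu$, $A_\mu B_\mu$ is a Hall $\mu$-subgroup of $G$; (2) for a prime $p$, $p\in\pi'$ if and only if $G'\setminus Z(G)$ has an element of order $p$, if and only if $A\setminus Z(G)$ has an element of order $p$; (3) $G'_{\pi'}=A_{\pi'}$ and $A_{\pi'}\cap B_{\pi'}=1$; (4) $\pi'=\pi(m)\setminus\pi(r)$, $s_{\pi'}=m_{\pi'}$ and $o=o_G$; (5) $G=A_{\pi'}\rtimes\big(B_{\pi'}\times\prod_{p\in\pi}A_pB_p\big)$; in particular $[B_{p'},A_p]=1$ for every $p\in\pi$.
   Context: All groups are finite; $G'$ is the commutator subgroup and $Z(G)$ the center. For $m\in\mathbb N$, $\pi(m)$ is the set of prime divisors of $m$, $m_p$ the largest power of $p$ dividing $m$, $m_\mu=\prod_{p\in\mu}m_p$. For a cyclic (or abelian) group $X$ and set of primes $\mu$, $X_\mu$ is its Hall $\mu$-subgroup; $X_p$, $X_{p'}$ are the Sylow $p$-subgroup and Hall $p'$-subgroup. For $G$ finite metacyclic: $\pi$ is the set of primes $p$ dividing $|G|$ such that $G$ has a normal Hall $p'$-subgroup; $\pi'=\pi(|G|)\setminus\pi$; $o_G$ is the $\pi$-part of the order of the group $\mathrm{Inn}_G(G'_{\pi'})$ of automorphisms of $G'_{\pi'}$ induced by conjugation by elements of $G$. A metacyclic factorization of $G$ is $G=AB$ with $A$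 a cyclic normal subgroup and $B$ a cyclic subgroup. For $A$ cyclic normal of order $m$, $T_G(A)$ is the subgroup of $\mathcal U_m$ (units of $\mathbb Z/m\mathbb Z$) of classes $[k]_m$ such that $x\mapsto x^k$ is the restriction to $A$ of an inner automorphism of $G$. For a cyclic $T\le\mathcal U_m$, $\mathrm{inv}(T)=(r,\epsilon,o)$ where $r$ is the greatest divisor of $m$ such that $T$ maps trivially to $\mathcal U_{r_{2'}}$ and into $\{\pm1\}$ in $\mathcal U_{r_2}$ (via reduction maps); $\epsilon=-1$ if the image of $T$ in $\mathcal U_{r_2}$ is nontrivial and $\epsilon=1$ otherwise; $o$ is the order of the image of the Hall $\nu'$-subgroup of $T$ in $\mathcal U_{m_\nu}$, where $\nu=\pi(m)\setminus\pi(r)$ and $\nu'$ is the set of primes not in $\nu$. $(r_G(A),\epsilon_G(A),o_G(A))=\mathrm{inv}(T_G(A))$. *)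

From mathcomp Require Import all_boot all_fingroup all_solvable.
Set Implicit Arguments. Unset Strict Implicit. Unset Printing Implicit Defensive.
Import GroupScope.

Section MetacyclicInvariants.
Variable gT : finGroupType.
Implicit Types G A X : {set gT}.

Definition piG (G : {set gT}) : nat_pred :=
  [pred p | [&& prime p, p %| #|G| &
     [exists H : {group gT}, (p^').-Hall(G) H && (H <| G)]]].

Definition piG' (G : {set gT}) : nat_pred :=
  [pred p | [&& prime p, p %| #|G| & p \notin piG G]].

(* T_G(A) as the list of representatives k in [0, m) (m = |A|) of the classes
   [k]_m in U_m such that x |-> x^k is the restriction to A of conjugation by
   some element of G. *)
Definition TG (G A : {set gT}) : seq nat :=
  [seq k <- iota 0 #|A| | coprime k #|A| &&
     [exists g in G, [forall x in A, x ^ g == x ^+ k]]].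

(* r divides m and T maps trivially to U_{r_2'} and into {+-1} in U_{r_2} *)
Definition r_ok (T : seq nat) (r : nat) : bool :=
  all (fun k => (k == 1 %[mod r`_(2^')]) &&
               ((k == 1 %[mod r`_2]) || (r`_2 %| k.+1))) T.

Definition rGA (G A : {set gT}) : nat :=
  \max_(d < #|A|.+1 | (d %| #|A|) && r_ok (TG G A) d) d.

Definition nuGA (G A : {set gT}) : nat_pred :=
  [pred p | (p \in primes #|A|) && (p \notin primes (rGA G A))].

(* Hall nu'-subgroup of the finite abelian group T (a subgroup of U_m):
   its elements are those whose order divides |T|_{nu'} *)
Definition TG_nu' (G A : {set gT}) : seq nat :=
  let T := TG G A in
  [seq k <- T | k ^ (size T)`_((nuGA G A)^') == 1 %[mod #|A|]].

(* o_G(A): order of the image of the Hall nu'-subgroup of T in U_{m_nu} *)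
Definition oGA (G A : {set gT}) : nat :=
  size (undup [seq k %% #|A|`_(nuGA G A) | k <- TG_nu' G A]).

(* Inn_G(X): automorphisms of X induced by conjugation by elements of G,
   represented by their graphs (identity outside X). *)
Definition InnG (G X : {set gT}) : {set {ffun gT -> gT}} :=
  [set [ffun x => if x \in X then x ^ g else x] | g in G].

Definition oG (G : {set gT}) : nat :=
  #|InnG G 'O_(piG' G)(G^`(1))|`_(piG G).

End MetacyclicInvariants.

From mathcomp Require Import all_boot all_fingroup all_solvable.
Set Implicit Arguments. Unset Strict Implicit. Unset Printing Implicit Defensive.
Import GroupScope.

(* Since A is cyclic and normal, all its subgroups are normal in G, G' <= A, and
   A :&: B is central; the Hall mu-subgroups of G are products of those of A and B.
   A prime p is in pi' exactly when A has a noncentral element x of order p: a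
   normal p'-complement would centralise <[x]>, and so would a Sylow p-subgroup;
   conversely, if all such elements are central, the coprime action of B_p' on A_p
   is trivial and A_p' B_p' is a normal p'-complement. Reading centrality off the
   exponents k with x ^ g = x ^+ k gives pi' = pi(m) \ pi(r). As A_pi' meets Z(G)
   trivially, a generator b of B acts fixed-point-freely on A_pi', so
   x |-> [x, b] maps A_pi' onto itself inside G'. For p in pi, B_p' lies in the
   normal p'-complement, hence centralises A_p, which yields the decomposition (5).
   Finally o_G(A) and o_G both count the pi-part of the group G / C_G(A_pi') of
   automorphisms induced on A_pi'. *)

Lemma partnU n (sg tau : nat_pred) : 0 < n -> {in sg, forall q, q \notin tau} ->
  (n`_[predU sg & tau] = n`_sg * n`_tau)%N.
Proof.
move=> n_gt0 sg_tau.
rewrite -{1}(partnC sg (part_gt0 [predU sg & tau] n)).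
rewrite partn_part; last by move=> q sg_q; rewrite inE /= sg_q.
congr (_ * _)%N; rewrite -partnI; apply: eq_partn => q; rewrite !inE /=.
by case: (boolP (q \in sg)) => [/sg_tau/negbTE-> | _]; rewrite ?andbT.
Qed.

Lemma eq_modn_dvd d d' m n : d' %| d -> m = n %[mod d] -> m = n %[mod d'].
Proof. by move=> dv_d' e; rewrite -(modn_dvdm m dv_d') e modn_dvdm. Qed.

Lemma r_ok_mod_prime (T : seq nat) r p : 0 < r -> r_ok T r -> prime p -> p %| r ->
  {in T, forall k, k == 1 %[mod p]}.
Proof.
move=> r_gt0 okr pr_p p_r k /(allP okr)/andP[k1_r2' k_pm1_r2].
have [p2 | p_odd] := eqVneq p 2.
  have := partn_dvd 2 r_gt0 p_r; rewrite p2 part_pnat_id ?pnat_id // => two_r2.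
  case/orP: k_pm1_r2 => [/eqP k1 | /(dvdn_trans two_r2)]; first by rewrite (eq_modn_dvd two_r2 k1).
  by rewrite modn2 dvdn2 /= negbK => ->.
have := partn_dvd 2^' r_gt0 p_r; rewrite part_pnat_id ?pnatE ?inE // => p_r2'.
by apply/eqP; apply: eq_modn_dvd p_r2' (eqP k1_r2').
Qed.

Lemma r_okM_prime (T : seq nat) r p : 0 < r -> r_ok T r -> prime p -> ~~ (p %| r) ->
  {in T, forall k, k == 1 %[mod p]} -> r_ok T (r * p).
Proof.
move=> r_gt0 okr pr_p p_r k1; apply/allP => k Tk.
have /andP[k1_r2' k_pm1_r2] := allP okr k Tk.
rewrite !partnM ?(prime_gt0 pr_p) //.
have [p2 | p_odd] := eqVneq p 2.
  have p2'_1 : (p`_(2^') = 1)%N by rewrite part_p'nat // pnatNK p2 pnat_id.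
  have r2_1 : (r`_2 = 1)%N by rewrite part_p'nat // p'natE // -p2.
  have p2_2 : (p`_2 = 2)%N by rewrite p2 part_pnat_id ?pnat_id.
  by rewrite p2'_1 p2_2 r2_1 muln1 mul1n k1_r2' -p2 k1.
have p2'_p : (p`_(2^') = p)%N by rewrite part_pnat_id // pnatE // inE /= eq_sym.
have p2_1 : (p`_2 = 1)%N by rewrite part_p'nat // pnatE // inE /= eq_sym.
rewrite p2'_p p2_1 muln1 k_pm1_r2 andbT chinese_remainder ?k1_r2' ?k1 //.
rewrite coprime_sym prime_coprime //; apply: contra p_r => /dvdn_trans; apply.
exact: dvdn_part.
Qed.

Lemma card_imset_eq_kernel (T1 T2 T3 : finType) (f : T1 -> T2) (f' : T1 -> T3) (S : {pred T1}) :
  {in S &, forall x y, (f x == f y) = (f' x == f' y)} -> #|f @: S| = #|f' @: S|.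
Proof.
move=> eq_ker; pose ff' x := (f x, f' x).
have -> : f @: S = fst @: (ff' @: S) by rewrite -imset_comp.
have -> : f' @: S = snd @: (ff' @: S) by rewrite -imset_comp.
have inj1 : {in ff' @: S &, injective fst}.
  move=> _ _ /imsetP[x Sx ->] /imsetP[y Sy ->] /= eq_xy.
  by rewrite /ff' eq_xy; move: (eq_ker x y Sx Sy); rewrite eq_xy eqxx => /esym/eqP->.
have inj2 : {in ff' @: S &, injective snd}.
  move=> _ _ /imsetP[x Sx ->] /imsetP[y Sy ->] /= eq_xy.
  by rewrite /ff' eq_xy; move: (eq_ker x y Sx Sy); rewrite eq_xy eqxx => /eqP->.
by rewrite (card_in_imset inj1) (card_in_imset inj2).
Qed.

Lemma size_undup_map_eq_kernel (T1 T2 T3 : eqType) (f : T1 -> T2) (f' : T1 -> T3) (s : seq T1) :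
  {in s &, forall x y, (f x == f y) = (f' x == f' y)} ->
  size (undup (map f s)) = size (undup (map f' s)).
Proof.
elim: s => [|x s IHs] //= eq_ker.
have eq_ker_s : {in s &, forall x y, (f x == f y) = (f' x == f' y)}.
  by move=> y z sy sz; apply: eq_ker; rewrite inE ?sy ?sz orbT.
have -> : (f x \in map f s) = (f' x \in map f' s).
  apply/mapP/mapP => [[y sy /eqP] | [y sy /eqP]]; exists y => //; apply/eqP.
    by rewrite -eq_ker ?inE ?eqxx ?sy ?orbT.
  by rewrite eq_ker ?inE ?eqxx ?sy ?orbT.
by case: ifP => _ /=; rewrite IHs.
Qed.

Lemma card_set_seq (T : finType) (s : seq T) : #|[set y in s]| = size (undup s).
Proof. by rewrite cardsE -(eq_card (mem_undup s)); apply/card_uniqP/undup_uniq. Qed.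

Section AbelianPcores.
Variable gT : finGroupType.
Implicit Types (X Y H : {group gT}) (mu : nat_pred).

Lemma card_abelian_pcore mu X : abelian X -> #|'O_mu(X)| = (#|X|`_mu)%N.
Proof. by move/abelian_nil/(nilpotent_pcore_Hall mu)/card_Hall. Qed.

Lemma sub_abelian_pcore mu X H :
  abelian X -> H \subset X -> (H \subset 'O_mu(X)) = mu.-group H.
Proof. by move/abelian_nil/(nilpotent_pcore_Hall mu)/sub_Hall_pcore; apply. Qed.

Lemma pcoreI_abelian mu X Y :
  abelian X -> abelian Y -> 'O_mu(X) :&: 'O_mu(Y) = 'O_mu(X :&: Y).
Proof.
move=> abX abY; have abXY : abelian (X :&: Y) := abelianS (subsetIl X Y) abX.
apply/eqP; rewrite eqEsubset sub_abelian_pcore ?setISS ?pcore_sub //=.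
rewrite (pgroupS (subsetIl _ _) (pcore_pgroup _ _)) /=.
have sOX : 'O_mu(X :&: Y) \subset X := subset_trans (pcore_sub _ _) (subsetIl X Y).
have sOY : 'O_mu(X :&: Y) \subset Y := subset_trans (pcore_sub _ _) (subsetIr X Y).
by rewrite subsetI !sub_abelian_pcore ?pcore_pgroup.
Qed.

Lemma abelian_pcore_sub (sg : nat_pred) X Y : abelian X -> Y \subset X ->
  (forall q, prime q -> q \in sg -> 'O_q(X) \subset Y) -> 'O_sg(X) \subset Y.
Proof.
move=> abX sYX sXqY; have abY := abelianS sYX abX.
have X_Y : #|X|`_sg %| #|Y|.
  apply/dvdn_partP => [|q]; first exact: part_gt0.
  rewrite mem_primes => /and3P[pr_q _ q_dv].
  have sg_q : q \in sg.
    by apply: (pnatPpi (part_pnat sg #|X|)); rewrite mem_primes pr_q part_gt0.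
  rewrite partn_part => [|_ /eqP-> //].
  by rewrite -card_abelian_pcore ?cardSg ?sXqY.
have sYX_sg : 'O_sg(Y) \subset 'O_sg(X).
  by rewrite sub_abelian_pcore ?pcore_pgroup ?(subset_trans (pcore_sub _ _)).
have /eqP <- : 'O_sg(Y) == 'O_sg(X).
  rewrite eqEcard sYX_sg !card_abelian_pcore // dvdn_leq ?part_gt0 //.
  by rewrite -(part_pnat_id (part_pnat sg #|X|)) partn_dvd.
exact: pcore_sub.
Qed.

End AbelianPcores.

Section NormalSubgroups.
Variable gT : finGroupType.
Implicit Types G X H P Q : {group gT}.

Lemma normal_prime_sub_center G X H :
  X <| G -> prime #|X| -> #|X|^'.-Hall(G) H -> H <| G -> X \subset 'Z(G).
Proof.
move=> nsXG pr_X hallH nsHG; have sXG := normal_sub nsXG.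
have sHG := pHall_sub hallH.
have cXH : H \subset 'C(X).
  have coXH : coprime #|X| #|H|.
    exact: pnat_coprime (pnat_id pr_X) (pHall_pgroup hallH).
  rewrite centsC; apply/commG1P/trivgP; rewrite -(coprime_TIg coXH).
  by rewrite commg_subI // subsetI ?subxx ?(subset_trans sXG) ?(subset_trans sHG) ?normal_norm.
have [P sylP sXP] := Sylow_superset sXG (pnat_id pr_X : #|X|.-group X).
have cXP : P \subset 'C(X).
  have nsXP : X <| P := normalS sXP (pHall_sub sylP) nsXG.
  have ntX : X :!=: 1 by rewrite -cardG_gt1 prime_gt1.
  have /(prime_meetG pr_X) sXZ := meet_center_nil (pgroup_nil (pHall_pgroup sylP)) nsXP ntX.
  by rewrite centsC (subset_trans sXZ) ?subsetIr.
have defG : H * P = G.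
  apply/eqP; rewrite eqEcard mul_subG ?(pHall_sub sylP) //= TI_cardMg.
    by rewrite (card_Hall hallH) (card_Hall sylP) mulnC partnC.
  apply: coprime_TIg; rewrite coprime_sym.
  exact: pnat_coprime (pHall_pgroup sylP) (pHall_pgroup hallH).
by rewrite subsetI sXG centsC -defG mul_subG.
Qed.

Lemma normal_prime_sub_der1 G X :
  X <| G -> prime #|X| -> ~~ (X \subset 'Z(G)) -> X \subset G^`(1).
Proof.
move=> nsXG pr_X ncXG; have [sXG nXG] := andP nsXG.
have ntXG : [~: X, G] != 1.
  by apply: contra ncXG => /eqP/commG1P cXG; rewrite subsetI sXG.
have sXGX : [~: X, G] \subset X by rewrite commg_subl.
have sXXG : X \subset [~: X, G].
  by apply: prime_meetG pr_X _; rewrite (setIidPr sXGX).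
by rewrite (subset_trans sXXG) // derg1 commgSS.
Qed.

Lemma coprime_abelian_cents_prime_elts (p : nat) P Q :
  p.-group P -> abelian P -> p^'.-group Q -> Q \subset 'N(P) ->
  {in P, forall y, #[y] = p -> y \in 'C(Q)} -> P \subset 'C(Q).
Proof.
move=> pP abP p'Q nPQ cQ_p; apply/commG1P/eqP; apply/negPn/negP => ntPQ.
have sPQ_P : [~: P, Q] \subset P by rewrite commg_subl.
have [pr_p p_dv _] := pgroup_pdiv (pgroupS sPQ_P pP) ntPQ.
have [y PQy oy] := Cauchy pr_p p_dv.
have : y \in 'C_[~: P, Q](Q) by rewrite inE PQy cQ_p ?(subsetP sPQ_P).
rewrite coprime_abel_cent_TI ?(pnat_coprime pP) // => /set1P y1.
by move: (prime_gt1 pr_p); rewrite -oy y1 order1.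
Qed.

Lemma fixfree_normal_sub_der1 G X b :
  X <| G -> b \in G -> 'C_X[b] = 1 -> X \subset G^`(1).
Proof.
move=> nsXG Gb fixfree; have [sXG nXG] := andP nsXG.
pose f x := [~ x, b].
have f_inj : {in X &, injective f}.
  move=> x y Xx Xy; rewrite /f !commgEl => exy.
  suff : y * x^-1 \in 'C_X[b] by rewrite fixfree => /set1P/eqP; rewrite -eq_mulgV1 => /eqP.
  rewrite inE groupM ?groupV //=; apply/cent1P/commgP/conjg_fixP.
  rewrite conjMg conjVg.
  have -> : x ^ b = x * (y^-1 * y ^ b) by rewrite -exy mulKVg.
  by move: (y ^ b) => yb; rewrite !invMg invgK !mulgA mulgV mul1g.
have sfX : f @: X \subset X :&: G^`(1).
  apply/subsetP => _ /imsetP[x Xx ->].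
  apply/setIP; split; last exact: mem_commg (subsetP sXG x Xx) Gb.
  by rewrite /f commgEl groupM ?groupV ?memJ_norm ?(subsetP nXG).
have /eqP efX : f @: X == X.
  by rewrite eqEcard (subset_trans sfX (subsetIl _ _)) (card_in_imset f_inj) /=.
by rewrite -efX (subset_trans sfX (subsetIr _ _)).
Qed.

Lemma conj_expg_pow (Y : {set gT}) g k n :
  {in Y, forall x, x ^ g = x ^+ k} -> {in Y, forall x, x ^ (g ^+ n) = x ^+ (k ^ n)}.
Proof.
move=> conj_k; elim: n => [|n IHn] x Yx; first by rewrite expg0 conjg1 expn0 expg1.
by rewrite expgSr conjgM IHn // conjXg conj_k // -expgM -expnS.
Qed.

Lemma expg_part_index_coset (pi : nat_pred) (G N : {group gT}) h :
  G \subset 'N(N) -> h \in G -> pi.-elt (coset N h) -> h ^+ (#|G : N|`_pi)%N \in N.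
Proof.
move=> nNG Gh pi_h; have Nh := subsetP nNG h Gh.
have dv_h : #[coset N h] %| (#|G : N|`_pi)%N.
  rewrite -(part_pnat_id pi_h) partn_dvd // -card_quotient //.
  by rewrite order_dvdG ?mem_quotient.
by apply: coset_idr; rewrite ?groupX // morphX //; apply/eqP; rewrite -order_dvdn.
Qed.

End NormalSubgroups.

Section RestrictedMaps.
Variable gT : finGroupType.
Implicit Types (G Y : {group gT}) (S : {set gT}).

Definition conj_on (Y : {set gT}) g : {ffun gT -> gT} :=
  [ffun x => if x \in Y then x ^ g else x].

Definition pow_on (Y : {set gT}) k : {ffun gT -> gT} :=
  [ffun x => if x \in Y then x ^+ k else x].

Lemma eq_pow_on_cyclic Y k k' :
  cyclic Y -> (pow_on Y k == pow_on Y k') = (k == k' %[mod #|Y|]).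
Proof.
case/cyclicP => y defY; apply/eqP/eqP => [/ffunP/(_ y) | eq_k].
  by rewrite !ffunE defY cycle_id => /eqP; rewrite eq_expg_mod_order => /eqP.
apply/ffunP => x; rewrite !ffunE; case: ifP => // Yx.
rewrite -expg_mod_order -(modn_dvdm k (order_dvdG Yx)) eq_k.
by rewrite modn_dvdm ?order_dvdG ?expg_mod_order.
Qed.

Lemma norm_subcent G Y : G \subset 'N(Y) -> G \subset 'N('C_G(Y)).
Proof. by move=> nYG; rewrite normsI ?normG ?norms_cent. Qed.

Lemma eq_conj_on G Y g h : G \subset 'N(Y) -> g \in G -> h \in G ->
  (conj_on Y g == conj_on Y h) = (coset 'C_G(Y) g == coset 'C_G(Y) h).
Proof.
move=> nYG Gg Gh; have nCG := norm_subcent nYG.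
have Ngh : g * h^-1 \in 'N('C_G(Y)) by rewrite groupM ?groupV ?(subsetP nCG).
rewrite eq_mulgV1 -morphV ?(subsetP nCG) // -morphM ?groupV ?(subsetP nCG) //.
apply/eqP/eqP => [/ffunP eq_gh | /(coset_idr Ngh)].
  apply: coset_id; rewrite inE groupM ?groupV //=; apply/centP => y Yy.
  apply/commute_sym/commgP/conjg_fixP.
  by move: (eq_gh y); rewrite !ffunE Yy conjgM => ->; rewrite conjgK.
rewrite inE => /andP[_ /centP cYgh]; apply/ffunP => y; rewrite !ffunE; case: ifP => // Yy.
have : y ^ (g * h^-1) = y by apply/conjg_fixP/commgP/commute_sym/cYgh.
by rewrite conjgM => /(congr1 (conjg^~ h)); rewrite conjgKV.
Qed.

Lemma card_conj_on G Y S : G \subset 'N(Y) -> S \subset G ->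
  #|conj_on Y @: S| = #|coset 'C_G(Y) @: S|.
Proof.
move=> nYG sSG; apply: card_imset_eq_kernel => g h Sg Sh.
by rewrite (eq_conj_on nYG) ?(subsetP sSG).
Qed.

Lemma card_conj_on_quotient G Y : G \subset 'N(Y) -> #|conj_on Y @: G| = #|G / 'C_G(Y)|.
Proof. by move=> nYG; rewrite (card_conj_on nYG) // quotientE morphimEsub ?norm_subcent. Qed.

Lemma conj_on_pow (Y : {set gT}) g k :
  {in Y, forall x, x ^ g = x ^+ k} -> conj_on Y g = pow_on Y k.
Proof. by move=> conj_k; apply/ffunP => x; rewrite !ffunE; case: ifP => // /conj_k. Qed.

End RestrictedMaps.

Section MetacyclicFactorization.
Variable gT : finGroupType.
Variables G A B : {group gT}.
Hypotheses (nsAG : A <| G) (cycA : cyclic A) (cycB : cyclic B) (defG : A * B = G).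

Let sAG : A \subset G. Proof. by rewrite -defG mulG_subl. Qed.
Let sBG : B \subset G. Proof. by rewrite -defG mulG_subr. Qed.
Let nAG : G \subset 'N(A). Proof. exact: normal_norm nsAG. Qed.
Let abA : abelian A. Proof. exact: cyclic_abelian. Qed.
Let abB : abelian B. Proof. exact: cyclic_abelian. Qed.

Lemma sub_cyclic_normal (H : {group gT}) : H \subset A -> H <| G.
Proof. by move=> sHA; apply: char_normal_trans nsAG; rewrite sub_cyclic_char. Qed.

Lemma pcore_normal_cyclic mu : 'O_mu(A) <| G.
Proof. exact/sub_cyclic_normal/pcore_sub. Qed.

Lemma der1_sub_cyclic : G^`(1) \subset A.
Proof. by rewrite der1_min // -defG quotientMidl quotient_abelian. Qed.

Lemma mem_center_cyclic z : z \in A -> (forall b, b \in B -> commute z b) -> z \in 'Z(G).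
Proof.
move=> Az cBz; apply/centerP; split; first exact: subsetP sAG z Az.
move=> g; rewrite -defG => /imset2P[x y Ax By ->].
by apply: commuteM; [apply: (centsP abA) | apply: cBz].
Qed.

Lemma cap_factors_sub_center : A :&: B \subset 'Z(G).
Proof.
apply/subsetP => z /setIP[Az Bz]; apply: mem_center_cyclic => // b Bb.
exact: (centsP abB).
Qed.

Definition hallAB mu := 'O_mu(A) * 'O_mu(B).

Lemma hallAB_group_set mu : group_set (hallAB mu).
Proof.
apply/comm_group_setP/esym/normC.
rewrite (subset_trans _ (normal_norm (pcore_normal_cyclic mu))) //.
exact: subset_trans (pcore_sub _ _) sBG.
Qed.

Canonical hallAB_group mu := Group (hallAB_group_set mu).

Lemma hallAB_Hall mu : mu.-Hall(G) (hallAB mu).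
Proof.
rewrite pHallE -defG mulgSS ?pcore_sub //=.
have /eqP := mul_cardG 'O_mu(A) 'O_mu(B).
rewrite pcoreI_abelian // !card_abelian_pcore ?(abelianS (subsetIl A B)) // => /eqP eH.
have := mul_cardG A B; rewrite defG => /(congr1 (partn^~ mu)).
by rewrite !partnM ?cardG_gt0 // => /eqP; rewrite eH eqn_pmul2r ?part_gt0.
Qed.

Lemma card_hallAB mu : #|hallAB mu| = (#|G|`_mu)%N.
Proof. exact: card_Hall (hallAB_Hall mu). Qed.

Definition noncentral_of_order (X : {set gT}) p :=
  exists x, x \in X :\: 'Z(G) /\ #[x] = p.

Lemma noncentral_der1P p : prime p ->
  noncentral_of_order G^`(1) p <-> noncentral_of_order A p.
Proof.
move=> pr_p; split=> [[x [/setDP[Dx nZx] ox]] | [x [/setDP[Ax nZx] ox]]].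
  by exists x; rewrite inE nZx (subsetP der1_sub_cyclic).
exists x; split=> //; rewrite inE nZx /=.
have nsXG : <[x]> <| G by rewrite sub_cyclic_normal ?cycle_subG.
have ncXG : ~~ (<[x]> \subset 'Z(G)) by rewrite cycle_subG.
by rewrite -cycle_subG normal_prime_sub_der1 // -orderE ox.
Qed.

Lemma noncentral_pi' p : prime p -> noncentral_of_order A p -> p \in piG' G.
Proof.
move=> pr_p [x [/setDP[Ax nZx] ox]]; have Gx := subsetP sAG x Ax.
rewrite inE /= pr_p -ox order_dvdG //=; apply: contra nZx.
rewrite inE /= => /and3P[_ _ /existsP[H /andP[hallH nsHG]]].
have nsXG : <[x]> <| G by rewrite sub_cyclic_normal ?cycle_subG.
by rewrite -cycle_subG (normal_prime_sub_center nsXG _ hallH) // -orderE ox.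
Qed.

Lemma pcore_cents_pcore' p :
  {in A, forall y, #[y] = p -> y \in 'Z(G)} -> 'O_p(A) \subset 'C('O_p^'(B)).
Proof.
move=> cZ; have sBpG : 'O_p^'(B) \subset G := subset_trans (pcore_sub _ _) sBG.
apply: coprime_abelian_cents_prime_elts (pcore_pgroup _ _) _ (pcore_pgroup _ _) _ _.
- exact: abelianS (pcore_sub _ _) abA.
- exact: subset_trans sBpG (normal_norm (pcore_normal_cyclic p)).
move=> y /(subsetP (pcore_sub _ _)) Ay /(cZ y Ay) /setIP[_ cGy].
exact: subsetP (centS sBpG) y cGy.
Qed.

Lemma pi'_noncentral p : p \in piG' G -> noncentral_of_order A p.
Proof.
rewrite inE /= => /and3P[pr_p pG /negP not_pi].
(* Otherwise B_p' centralises A_p, so A_p' B_p' is a normal p'-complement. *)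
have [/exists_inP[x Xx /eqP ox] | no_x] := boolP [exists x in A :\: 'Z(G), #[x] == p].
  by exists x.
case: not_pi; rewrite inE /= pr_p pG; apply/existsP.
exists (hallAB_group p^'); rewrite hallAB_Hall /=.
have cZ : {in A, forall y, #[y] = p -> y \in 'Z(G)}.
  move=> y Ay oy; apply: contraNT no_x => nZy; apply/exists_inP; exists y => //.
    by rewrite inE nZy.
  by rewrite oy.
have nH_Op'A : G \subset 'N('O_p^'(A)) := normal_norm (pcore_normal_cyclic _).
rewrite /normal (pHall_sub (hallAB_Hall _)) -defG mul_subG //.
  rewrite -(dprodW (nilpotent_pcoreC p (abelian_nil abA))) mul_subG //.
    rewrite normsM ?(subset_trans (pcore_sub _ _) (subset_trans sAG nH_Op'A)) //.
    by rewrite cents_norm // pcore_cents_pcore'.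
  by rewrite (subset_trans _ (normG _)) ?mulG_subl.
rewrite normsM ?(subset_trans sBG nH_Op'A) // cents_norm //.
exact: sub_abelian_cent abB (pcore_sub _ _).
Qed.

Lemma piG'_noncentralP p : prime p -> p \in piG' G <-> noncentral_of_order A p.
Proof. by move=> pr_p; split; [apply: pi'_noncentral | apply: noncentral_pi']. Qed.

Lemma pcore_pi'_center_TI : 'O_(piG' G)(A) :&: 'Z(G) = 1.
Proof.
apply/eqP; apply: contraT => ntW; rewrite -cardG_gt1 in ntW.
have [y /setIP[Oy Zy] oy] := Cauchy (pdiv_prime ntW) (pdiv_dvd _).
have pr_q := pdiv_prime ntW; set q := pdiv _ in oy pr_q.
have pi'q : q \in piG' G.
  by have := mem_p_elt (pcore_pgroup _ _) Oy; rewrite /p_elt oy pnatE.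
have [x [/setDP[Ax nZx] ox]] := pi'_noncentral pi'q.
have Ay : y \in A := subsetP (pcore_sub _ _) y Oy.
have /eqP eXY : <[x]> == <[y]>.
  by rewrite (eq_subG_cyclic cycA) ?cycle_subG // -!orderE ox oy.
by case/negP: nZx; rewrite -cycle_subG eXY cycle_subG.
Qed.

Lemma pcore_pi'_sub_der1 : 'O_(piG' G)(A) \subset G^`(1).
Proof.
have [b defB] := cyclicP cycB.
have Bb : b \in B by rewrite defB cycle_id.
apply: (fixfree_normal_sub_der1 (pcore_normal_cyclic _) (subsetP sBG b Bb)).
apply/trivgP; rewrite -pcore_pi'_center_TI subsetI subsetIl /=.
apply/subsetP => z /setIP[Oz /cent1P czb].
apply: mem_center_cyclic (subsetP (pcore_sub _ _) z Oz) _ => b'.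
by rewrite defB => /cycleP[i ->]; apply: commuteX.
Qed.

Lemma pcore_pi'_der1 : 'O_(piG' G)(G^`(1)) = 'O_(piG' G)(A).
Proof.
apply/eqP; rewrite eqEsubset sub_abelian_pcore ?pcore_pgroup //=.
  by rewrite sub_abelian_pcore ?pcore_pgroup ?pcore_pi'_sub_der1 ?(abelianS der1_sub_cyclic).
exact: subset_trans (pcore_sub _ _) der1_sub_cyclic.
Qed.

Lemma pcore_pi'_factors_TI : 'O_(piG' G)(A) :&: 'O_(piG' G)(B) = 1.
Proof.
apply/trivgP; rewrite -pcore_pi'_center_TI subsetI subsetIl /= pcoreI_abelian //.
exact: subset_trans (pcore_sub _ _) cap_factors_sub_center.
Qed.

Lemma memTG k : (k \in TG G A) =
  [&& coprime k #|A|, [exists g in G, [forall x in A, x ^ g == x ^+ k]] & k < #|A|].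
Proof. by rewrite mem_filter mem_iota add0n leq0n -andbA. Qed.

Lemma exponent_in_TG g :
  g \in G -> exists2 k, k \in TG G A & {in A, forall x, x ^ g = x ^+ k}.
Proof.
move=> Gg; have [a defA] := cyclicP cycA.
have oa : #[a] = #|A| by rewrite defA.
have /cycleP[i ei] : a ^ g \in <[a]> by rewrite -defA memJ_norm ?(subsetP nAG) // defA cycle_id.
have eak : a ^ g = a ^+ (i %% #[a]) by rewrite ei expg_mod_order.
have conj_k : {in A, forall x, x ^ g = x ^+ (i %% #[a])}.
  by move=> x; rewrite defA => /cycleP[j ->]; rewrite conjXg eak expgnAC.
exists (i %% #[a]) => //; rewrite memTG -oa ltn_pmod ?order_gt0 // andbT.
rewrite coprime_sym -generator_coprime /generator -eak cycleJ -defA.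
rewrite (normsP nAG g Gg) eqxx /=.
by apply/exists_inP; exists g => //; apply/forall_inP => x Ax; rewrite conj_k.
Qed.

Lemma mem_TG_conj k :
  k \in TG G A -> exists2 g, g \in G & {in A, forall x, x ^ g = x ^+ k}.
Proof.
rewrite memTG => /and3P[_ /exists_inP[g Gg /forall_inP conj_k] _].
by exists g => // x Ax; apply/eqP/conj_k.
Qed.

Lemma TG_mod_prime_center p : prime p -> {in TG G A, forall k, k == 1 %[mod p]} ->
  {in A, forall x, #[x] = p -> x \in 'Z(G)}.
Proof.
move=> pr_p k1 x Ax ox; apply/centerP; split=> [|g Gg]; first exact: subsetP sAG x Ax.
have [k Tk conj_k] := exponent_in_TG Gg.
apply/commgP/conjg_fixP.
by rewrite conj_k // -expg_mod_order ox (eqP (k1 k Tk)) modn_small ?prime_gt1.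
Qed.

Lemma center_TG_mod_prime p x : x \in A -> x \in 'Z(G) -> #[x] = p ->
  {in TG G A, forall k, k == 1 %[mod p]}.
Proof.
move=> Ax /centerP[_ cGx] ox k Tk; have [g Gg conj_k] := mem_TG_conj Tk.
have /conjg_fixP : [~ x, g] == 1 by apply/commgP; apply: cGx.
by rewrite conj_k // -{2}(expg1 x) => /eqP; rewrite eq_expg_mod_order ox eq_sym.
Qed.

Lemma rGA_spec : let r := rGA G A in
  [/\ r %| #|A|, 0 < r, r_ok (TG G A) r &
      forall d, d %| #|A| -> r_ok (TG G A) d -> d <= r].
Proof.
move=> r.
have r_max d : d %| #|A| -> r_ok (TG G A) d -> d <= r.
  move=> d_A okd; have ltd : d < #|A|.+1 by rewrite ltnS dvdn_leq.
  by rewrite /r /rGA (bigmax_sup (Ordinal ltd)) ?d_A.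
have r_ok1 : r_ok (TG G A) 1 by apply/allP => k _; rewrite !partn1 !modn1.
have r_gt0 : 0 < r := r_max 1%N (dvd1n _) r_ok1.
have : (r == 0) || ((r %| #|A|) && r_ok (TG G A) r).
  rewrite /r /rGA; elim/big_ind: _ => // [x y | i /andP[-> ->]]; last by rewrite orbT.
  by rewrite /maxn; case: ifP.
by rewrite eqn0Ngt r_gt0 /= => /andP[]; split.
Qed.

Lemma noncentral_primes p : prime p ->
  noncentral_of_order A p <-> (p \in primes #|A|) && (p \notin primes (rGA G A)).
Proof.
move=> pr_p; have [r_A r_gt0 okr r_max] := rGA_spec; set r := rGA G A in r_A r_gt0 okr r_max *.
rewrite !mem_primes pr_p r_gt0 cardG_gt0 /=.
split=> [[x [/setDP[Ax nZx] ox]] | /andP[p_A p_r]].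
  rewrite -ox order_dvdG //= ox; apply: contra nZx => p_r.
  exact: TG_mod_prime_center pr_p (r_ok_mod_prime r_gt0 okr pr_p p_r) x Ax ox.
have [x Ax ox] := Cauchy pr_p p_A.
exists x; split=> //; rewrite inE Ax andbT; apply/negP => Zx.
have okrp := r_okM_prime r_gt0 okr pr_p p_r (center_TG_mod_prime Ax Zx ox).
have rp_A : r * p %| #|A| by rewrite Gauss_dvd ?r_A ?p_A // coprime_sym prime_coprime.
by have := r_max _ rp_A okrp; rewrite leqNgt ltn_Pmulr ?prime_gt1.
Qed.

Lemma piG'_primes p : (p \in piG' G) = (p \in primes #|A|) && (p \notin primes (rGA G A)).
Proof.
have [pr_p | npr_p] := boolP (prime p); last first.
  by rewrite inE /= (negbTE npr_p) mem_primes (negbTE npr_p).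
apply/idP/idP => [/pi'_noncentral/(noncentral_primes pr_p) // | ].
by move/(noncentral_primes pr_p)/(noncentral_pi' pr_p).
Qed.

Lemma partn_index_pi' : partn #|G : B| (piG' G) = partn #|A| (piG' G).
Proof.
have eA : #|A| = (#|G : B| * #|A :&: B|)%N.
  have := mul_cardG A B; rewrite defG -(Lagrange sBG) -mulnA mulnC.
  by move/eqP; rewrite eqn_pmul2l ?cardG_gt0 // => /eqP.
have AB_pi' : partn #|A :&: B| (piG' G) = 1%N.
  rewrite -card_abelian_pcore ?(abelianS (subsetIl A B)) // -pcoreI_abelian //.
  by rewrite pcore_pi'_factors_TI cards1.
by rewrite eA partnM ?cardG_gt0 // AB_pi' muln1.
Qed.

Lemma comm_pcore'_pcore p : p \in piG G -> [~: 'O_p^'(B), 'O_p(A)] = 1.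
Proof.
rewrite inE /= => /and3P[_ _ /existsP[H /andP[hallH nsHG]]].
have sBpH : 'O_p^'(B) \subset H.
  by rewrite (sub_normal_Hall hallH) ?pcore_pgroup ?(subset_trans (pcore_sub _ _)).
have coHA : coprime #|H| #|'O_p(A)|.
  by apply: pnat_coprime (pHall_pgroup hallH) _; rewrite pnatNK; apply: pcore_pgroup.
apply/trivgP; rewrite -(coprime_TIg coHA).
apply: commg_subI; rewrite subsetI ?sBpH ?subxx /=.
  exact: subset_trans sBpH (subset_trans (pHall_sub hallH) (normal_norm (pcore_normal_cyclic p))).
exact: subset_trans (pcore_sub _ _) (subset_trans sAG (normal_norm nsHG)).
Qed.

Lemma pcore_cents_pcoreB (sg tau : nat_pred) : {subset sg <= piG G} ->
  {in tau, forall q, q \notin sg} -> 'O_sg(A) \subset 'C('O_tau(B)).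
Proof.
move=> sg_pi tau'sg; rewrite (subset_trans _ (subsetIr A _)) //.
apply: abelian_pcore_sub abA (subsetIl _ _) _ => q pr_q sg_q; rewrite subsetI pcore_sub /=.
rewrite (subset_trans _ (centS (_ : 'O_tau(B) \subset 'O_q^'(B)))) //.
  by rewrite centsC; apply/commG1P/comm_pcore'_pcore/sg_pi.
by apply: sub_pcore => q' /tau'sg; rewrite !inE; apply: contra => /eqP->.
Qed.

Lemma hallAB_pred0 : hallAB pred0 = 1.
Proof. by apply/card1_trivg; rewrite card_hallAB part_p'nat //; apply/pnatP. Qed.

Lemma hallAB_dprod (sg tau : nat_pred) :
  {subset sg <= piG G} -> {subset tau <= piG G} -> {in sg, forall q, q \notin tau} ->
  hallAB sg \x hallAB tau = hallAB [predU sg & tau].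
Proof.
move=> sg_pi tau_pi sg'tau.
have cAsBt : 'O_sg(A) \subset 'C('O_tau(B)).
  by apply: pcore_cents_pcoreB => // q tau_q; apply/negP => /sg'tau; rewrite tau_q.
have cAtBs : 'O_tau(A) \subset 'C('O_sg(B)) by apply: pcore_cents_pcoreB => // q /sg'tau.
have cHH : hallAB tau \subset 'C(hallAB sg).
  rewrite centM subsetI !mul_subG // 1?centsC //.
    exact: sub_abelian_cent2 abB (pcore_sub _ _) (pcore_sub _ _).
  exact: sub_abelian_cent2 abA (pcore_sub _ _) (pcore_sub _ _).
have coHH : coprime #|hallAB sg| #|hallAB tau|.
  apply: pnat_coprime (pHall_pgroup (hallAB_Hall sg)) _.
  apply: sub_in_pnat (pHall_pgroup (hallAB_Hall tau)) => q _ tau_q.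
  by rewrite inE /=; apply: contraL tau_q => /sg'tau.
have sg_U : {subset sg <= [predU sg & tau]} by move=> q; rewrite inE /= => ->.
have tau_U : {subset tau <= [predU sg & tau]} by move=> q; rewrite inE /= orbC => ->.
rewrite dprodE ?coprime_TIg //; apply/eqP; rewrite eqEcard.
rewrite mul_subG ?mulgSS ?sub_pcore //=.
by rewrite (TI_cardMg (coprime_TIg coHH)) !card_hallAB partnU.
Qed.

Lemma eq_hallAB (sg tau : nat_pred) : sg =i tau -> hallAB sg = hallAB tau.
Proof. by move=> eq_sg; rewrite /hallAB (eq_pcore A eq_sg) (eq_pcore B eq_sg). Qed.

Lemma big_dprod_hallAB_seq (s : seq nat) : uniq s ->
  \big[dprod/1]_(p <- s | p \in piG G) ('O_p(A) * 'O_p(B)) =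
    hallAB [pred q | (q \in s) && (q \in piG G)].
Proof.
elim: s => [_ | p s IHs /= /andP[s'p /IHs{}IHs]].
  by rewrite big_nil -hallAB_pred0; apply: eq_hallAB.
rewrite big_cons IHs; have [pi_p | pi'p] := ifP.
  rewrite (hallAB_dprod (sg := p)) => [|q /eqP-> //|q /andP[] //|q /eqP->].
    by apply: eq_hallAB => q; rewrite -!topredE /= in_cons inE; case: eqVneq => [-> | ].
  by rewrite -topredE /= (negbTE s'p).
apply: eq_hallAB => q; rewrite -!topredE /= in_cons; case: eqVneq => [-> | ] //=.
by rewrite pi'p andbF.
Qed.

Lemma big_dprod_hallAB :
  \big[dprod/1]_(p <- primes #|G| | p \in piG G) ('O_p(A) * 'O_p(B)) = hallAB (piG G).
Proof.
rewrite big_dprod_hallAB_seq ?primes_uniq //; apply: eq_hallAB => q; rewrite !inE.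
by apply: andb_idl; rewrite /= mem_primes cardG_gt0 => /and3P[-> ->].
Qed.

Lemma piG'_sub : {subset piG' G <= (piG G)^'}.
Proof. by move=> p /and3P[]. Qed.

Lemma piG_sub : {subset piG G <= (piG' G)^'}.
Proof. by move=> p pi_p; rewrite inE /= [p \in piG' G]inE /= pi_p !andbF. Qed.

Lemma partn_piG'_piG : (#|G|`_(piG' G) * #|G|`_(piG G))%N = #|G|.
Proof.
rewrite mulnC -{3}(partnC (piG G) (cardG_gt0 G)); congr (_ * _)%N.
apply: eq_in_partn => q; rewrite mem_primes => /and3P[pr_q _ q_G].
by rewrite !inE /= pr_q q_G.
Qed.

Lemma dprod_pcore_pi'_hallAB :
  'O_(piG' G)(B) \x hallAB (piG G) = 'O_(piG' G)(B) <*> hallAB (piG G).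
Proof.
apply: dprodEY.
  rewrite mul_subG //; first by apply: pcore_cents_pcoreB => // q /piG'_sub.
  exact: sub_abelian_cent2 abB (pcore_sub _ _) (pcore_sub _ _).
apply: coprime_TIg; apply: (@pnat_coprime (piG G)^').
  exact: sub_in_pnat (fun q _ => @piG'_sub q) (pcore_pgroup _ _).
by rewrite pnatNK; apply: pHall_pgroup (hallAB_Hall _).
Qed.

Lemma sdprod_pcore_pi' :
  'O_(piG' G)(A) ><| ('O_(piG' G)(B) <*> hallAB (piG G)) = G.
Proof.
set K := ('O_(piG' G)(B) <*> hallAB_group (piG G))%G.
have [nsBK _] := dprod_normal2 dprod_pcore_pi'_hallAB.
have cardK := dprod_card dprod_pcore_pi'_hallAB.
have hallBK : (piG' G).-Hall(K) 'O_(piG' G)(B).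
  rewrite pHallE (normal_sub nsBK) /= -cardK partnM ?cardG_gt0 //.
  rewrite part_pnat_id ?part_p'nat ?muln1 //; last exact: pcore_pgroup.
  exact: sub_in_pnat (fun q _ => @piG_sub q) (pHall_pgroup (hallAB_Hall _)).
have sKG : K \subset G.
  by rewrite join_subG (subset_trans (pcore_sub _ _) sBG) (pHall_sub (hallAB_Hall _)).
have tiAK : 'O_(piG' G)(A) :&: K = 1.
  apply/trivgP; rewrite -pcore_pi'_factors_TI subsetI subsetIl /=.
  rewrite (sub_normal_Hall hallBK nsBK (subsetIr _ _)).
  exact: pgroupS (subsetIl _ _) (pcore_pgroup _ _).
rewrite sdprodE ?(subset_trans sKG (normal_norm (pcore_normal_cyclic _))) //.
apply/eqP; rewrite eqEcard mul_subG ?(subset_trans (pcore_sub _ _) sAG) //=.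
rewrite (TI_cardMg tiAK) -cardK mulnA -(TI_cardMg pcore_pi'_factors_TI).
by rewrite -/(hallAB (piG' G)) !card_hallAB partn_piG'_piG.
Qed.

Lemma centA_expg_TG g k n : g \in G -> {in A, forall x, x ^ g = x ^+ k} ->
  (g ^+ n \in 'C_G(A)) = (k ^ n == 1 %[mod #|A|]).
Proof.
move=> Gg conj_k; have [a defA] := cyclicP cycA.
have Aa : a \in A by rewrite defA cycle_id.
have -> : (k ^ n == 1 %[mod #|A|]) = (a ^ (g ^+ n) == a).
  by rewrite (conj_expg_pow n conj_k Aa) -{2}(expg1 a) eq_expg_mod_order defA.
rewrite inE groupX //= defA cent_cycle.
by apply/cent1P/eqP => [/commute_sym/commgP/conjg_fixP | /conjg_fixP/commgP/commute_sym].
Qed.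

Lemma pow_on_TG (Y S : {set gT}) (P : pred nat) : Y \subset A -> S \subset G ->
  (forall g k, g \in G -> {in A, forall x, x ^ g = x ^+ k} -> (g \in S) = P k) ->
  [set y in map (pow_on Y) [seq k <- TG G A | P k]] = conj_on Y @: S.
Proof.
move=> sYA sSG S_P; apply/setP => y; rewrite inE.
apply/mapP/imsetP => [[k] | [g Sg ->]].
  rewrite mem_filter => /andP[Pk /mem_TG_conj[g Gg conj_k]] ->.
  by exists g; rewrite ?(S_P g k) // (conj_on_pow (sub_in1 (subsetP sYA) conj_k)).
have Gg := subsetP sSG g Sg; have [k Tk conj_k] := exponent_in_TG Gg.
exists k; first by rewrite mem_filter Tk -(S_P g) ?Sg.
by rewrite (conj_on_pow (sub_in1 (subsetP sYA) conj_k)).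
Qed.

Lemma size_TG : size (TG G A) = #|G : 'C_G(A)|.
Proof.
rewrite -card_quotient ?norm_subcent // -card_conj_on_quotient //.
rewrite -(pow_on_TG (P := predT)) // ?filter_predT ?card_set_seq.
rewrite (size_undup_map_eq_kernel (f' := id)) ?map_id ?undup_id ?filter_uniq ?iota_uniq //.
move=> k k' /[!memTG] /and3P[_ _ ltk] /and3P[_ _ ltk'].
by rewrite eq_pow_on_cyclic // !modn_small.
Qed.

Lemma nuGA_piG' : nuGA G A =i piG' G.
Proof. by move=> q; rewrite piG'_primes. Qed.

Section InducedAutomorphisms.
Let X := 'O_(piG' G)(A).
Let K := 'C_G(X).
Let nu' := (nuGA G A)^'.
Let e := ((size (TG G A))`_nu')%N.
(* G / C_G(A) is isomorphic to T_G(A), and Gnu' is the preimage of its Hall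
   nu'-subgroup. *)
Let Gnu' := [set g in G | g ^+ e \in 'C_G(A)].

Let nXG : G \subset 'N(X). Proof. exact: normal_norm (pcore_normal_cyclic _). Qed.
Let nKG : G \subset 'N(K). Proof. exact: norm_subcent nXG. Qed.
Let sGnu'G : Gnu' \subset G. Proof. by apply/subsetP => g /setIdP[]. Qed.

Lemma oGA_conj_on : oGA G A = #|conj_on X @: Gnu'|.
Proof.
have eA : (#|A|`_(nuGA G A))%N = #|X| by rewrite (eq_partn _ nuGA_piG') card_abelian_pcore.
rewrite /oGA eA (size_undup_map_eq_kernel (f' := pow_on X)); last first.
  by move=> k k' _ _; rewrite eq_pow_on_cyclic ?(cyclicS (pcore_sub _ _) cycA).
rewrite -card_set_seq.
rewrite (pow_on_TG (S := Gnu') (P := fun k => k ^ e == 1 %[mod #|A|])) ?pcore_sub //.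
by move=> g k Gg conj_k; rewrite inE Gg (centA_expg_TG _ Gg conj_k).
Qed.

Let abGK : abelian (G / K).
Proof.
rewrite sub_der1_abelian // (subset_trans der1_sub_cyclic) // subsetI sAG.
exact: sub_abelian_cent abA (pcore_sub _ _).
Qed.

Lemma coset_Gnu' : coset K @: Gnu' = 'O_nu'(G / K).
Proof.
apply/setP => y; apply/imsetP/idP => [[g /setIdP[Gg Cge] ->] | Oy].
  have GKg : coset K g \in G / K by apply: mem_quotient.
  rewrite -cycle_subG pcore_max -?sub_abelian_normal ?cycle_subG //.
  rewrite /pgroup -orderE (pnat_dvd _ (part_pnat nu' (size (TG G A)))) // order_dvdn.
  rewrite -morphX ?(subsetP nKG) //; apply/eqP/coset_id.
  by rewrite (subsetP (setIS G (centS (pcore_sub _ _))) _ Cge).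
have /morphimP[g Ng Gg def_y] : y \in G / K by apply: subsetP (pcore_sub _ _) y Oy.
rewrite {y}def_y in Oy *.
exists g.`_nu'; last first.
  rewrite (morph_constt (coset_morphism K)) // constt_p_elt //.
  exact: mem_p_elt (pcore_pgroup _ _) Oy.
have Gh : g.`_nu' \in G by apply: (subsetP _ _ (cycle_constt nu' g)); rewrite cycle_subG.
have nCG := norm_subcent nAG.
rewrite inE Gh /= /e size_TG expg_part_index_coset //.
by rewrite (morph_constt (coset_morphism _)) ?(subsetP nCG) // p_elt_constt.
Qed.

Lemma oGA_oG : oGA G A = oG G.
Proof.
rewrite oGA_conj_on (card_conj_on nXG sGnu'G) coset_Gnu' card_abelian_pcore //.
rewrite /oG pcore_pi'_der1 -[InnG G _]/(conj_on X @: G) card_conj_on_quotient //.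
apply: eq_in_partn => q; rewrite mem_primes => /and3P[pr_q _ q_GK].
have q_G : q %| #|G| by rewrite (dvdn_trans q_GK) // card_quotient ?dvdn_indexg.
by rewrite inE /= nuGA_piG' inE /= pr_q q_G negbK.
Qed.

End InducedAutomorphisms.

End MetacyclicFactorization.

Theorem lemma3p1 (gT : finGroupType) (G A B : {group gT}) :
  metacyclic G -> A <| G -> cyclic A -> cyclic B -> A * B = G ->
  let m := #|A| in let s := #|G : B| in
  let r := rGA G A in let o := oGA G A in
  let pi := piG G in let pi' := piG' G in
  (* (1) *)
  (forall mu : nat_pred,
     group_set ('O_mu(A) * 'O_mu(B)) /\ mu.-Hall(G) ('O_mu(A) * 'O_mu(B))) /\
  (* (2) *)
  (forall p : nat, prime p ->
     ((p \in pi') <-> (exists x, x \in G^`(1) :\: 'Z(G) /\ #[x] = p)) /\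
     ((exists x, x \in G^`(1) :\: 'Z(G) /\ #[x] = p) <->
      (exists x, x \in A :\: 'Z(G) /\ #[x] = p))) /\
  (* (3) *)
  ('O_pi'(G^`(1)) = 'O_pi'(A) /\ 'O_pi'(A) :&: 'O_pi'(B) = 1) /\
  (* (4) *)
  ((forall p : nat, (p \in pi') = (p \in primes m) && (p \notin primes r)) /\
   partn s pi' = partn m pi' /\ o = oG G) /\
  (* (5) *)
  ('O_pi'(A) ><| ('O_pi'(B) \x
     \big[dprod/1]_(p <- primes #|G| | p \in pi) ('O_p(A) * 'O_p(B))) = G /\
   (forall p : nat, p \in pi -> [~: 'O_p^'(B), 'O_p(A)] = 1)).
Proof.
(* Metacyclicity of G already follows from the factorization A * B = G. *)
move=> _ nsAG cycA cycB defG m s r o pi pi'.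
split=> [mu | ].
  split; first exact: hallAB_group_set nsAG cycA defG mu.
  exact: hallAB_Hall nsAG cycA cycB defG mu.
split=> [p pr_p | ].
  have der1P := noncentral_der1P nsAG cycA cycB defG pr_p.
  split; last exact: der1P.
  exact: iff_trans (piG'_noncentralP nsAG cycA cycB defG pr_p) (iff_sym der1P).
split.
  by rewrite (pcore_pi'_der1 nsAG cycA cycB defG) (pcore_pi'_factors_TI nsAG cycA cycB defG).
split.
  split; first exact: piG'_primes nsAG cycA cycB defG.
  by split; [exact: partn_index_pi' nsAG cycA cycB defG | exact: oGA_oG nsAG cycA cycB defG].
split; last exact: comm_pcore'_pcore nsAG cycA defG.
rewrite (big_dprod_hallAB nsAG cycA cycB defG) (dprod_pcore_pi'_hallAB nsAG cycA cycB defG).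
exact: sdprod_pcore_pi' nsAG cycA cycB defG.
Qed.
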